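(* For any $\alpha\in(0,1)$ and any $q>0$ there exist positive definite $2\times2$ matrices $A,B$ such that $LE_\alpha(A,B)\not\le\mathcal{A}_{\alpha,q}(A,B)$, where $LE_\alpha(A,B):=\exp((1-\alpha)\log A+\alpha\log B)$ and $\mathcal{A}_{\alpha,q}(A,B):=((1-\alpha)A^q+\alpha B^q)^{1/q}$.
   Context: $\le$ denotes the Loewner order on Hermitian matrices ($X\le Y$ iff $Y-X$ is positive semidefinite). *)

From HB Require Import structures.
From mathcomp Require Import all_boot all_order all_algebra.
From mathcomp Require Import complex.
From mathcomp Require Import boolp reals sequences exp.
Set Implicit Arguments. Unset Strict Implicit. Unset Printing Implicit Defensive.
Import Order.TTheory GRing.Theory Num.Theory.
Local Open Scope ring_scope.
Local Open Scope complex_scope.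

Section MatrixFunctions.
Variables (R : realType) (n : nat).
Local Notation C := R[i].

Definition adjmx (A : 'M[C]_n) : 'M[C]_n := (map_mx (@conjc R) A)^T.

Definition hermitian (A : 'M[C]_n) : Prop := adjmx A = A.

(* positive semidefinite / positive definite (Hermitian) matrices;
   in the ordered field C, 0 <= z means z is real and nonnegative *)
Definition psd (A : 'M[C]_n) : Prop :=
  hermitian A /\ forall v : 'cV[C]_n, 0 <= ((map_mx (@conjc R) v)^T *m A *m v) 0 0.

Definition posdef (A : 'M[C]_n) : Prop :=
  hermitian A /\ forall v : 'cV[C]_n, v != 0 ->
    0 < ((map_mx (@conjc R) v)^T *m A *m v) 0 0.

Definition loewner_le (X Y : 'M[C]_n) : Prop := psd (Y - X).

Definition unitarymx (U : 'M[C]_n) : Prop := U *m adjmx U = 1%:M.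

Definition spectral_decomp (A : 'M[C]_n) (U : 'M[C]_n) (d : 'rV[R]_n) : Prop :=
  unitarymx U /\ A = U *m diag_mx (map_mx (real_complex R) d) *m adjmx U.

(* Functional calculus: f(A) := U diag(f(d_i)) U^* for a spectral
   decomposition of the Hermitian matrix A (the result does not depend on
   the chosen decomposition); 0 if A has no such decomposition. *)
Definition mxfun (f : R -> R) (A : 'M[C]_n) : 'M[C]_n :=
  match pselect (exists p : 'M[C]_n * 'rV[R]_n, spectral_decomp A p.1 p.2) with
  | left H => let p := proj1_sig (cid H) in
      p.1 *m diag_mx (map_mx (fun x => real_complex R (f x)) p.2) *m adjmx p.1
  | right _ => 0
  end.

Definition mxexp (A : 'M[C]_n) := mxfun (@expR R) A.
Definition mxlog (A : 'M[C]_n) := mxfun (@ln R) A.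
Definition mxpow (q : R) (A : 'M[C]_n) := mxfun (fun x => powR x q) A.

Definition LEmean (alpha : R) (A B : 'M[C]_n) : 'M[C]_n :=
  mxexp (real_complex R (1 - alpha) *: mxlog A + real_complex R alpha *: mxlog B).

Definition powmean (alpha q : R) (A B : 'M[C]_n) : 'M[C]_n :=
  mxpow (1 / q) (real_complex R (1 - alpha) *: mxpow q A
                 + real_complex R alpha *: mxpow q B).

End MatrixFunctions.

From HB Require Import structures.
From mathcomp Require Import all_boot all_order all_algebra.
From mathcomp Require Import complex.
From mathcomp Require Import boolp reals sequences exp.
From mathcomp Require Import ring lra.
Set Implicit Arguments. Unset Strict Implicit. Unset Printing Implicit Defensive.
Import Order.TTheory GRing.Theory Num.Theory.
Local Open Scope ring_scope.
Local Open Scope complex_scope.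

(* Take A = R_u diag(E^(1/q), 1) R_u^T and B = R_w diag(e^(-1/q), 1) R_w^T, where
   R_u, R_w are the rotations with first columns u and w = (3/5, 4/5), and E is
   chosen so that the off-diagonal entries of (1-alpha) A^q + alpha B^q cancel.
   The power mean is then diagonal, and its second diagonal entry is at most 1
   when u is close to (1, 0).  On the other side, e^x >= (1 + x/3)^3 for every
   real x, so the second diagonal entry of LE_alpha(A, B) = exp S is at least
   that of the polynomial (I + S/3)^3.  As u approaches (1, 0), balancing forces
   E, hence the diagonal of log A, to grow, while the off-diagonal entry of S
   stays bounded away from 0; this pushes the entry of (I + S/3)^3 above 1. *)

Section SpectralCalculus.
Variables (R : realType) (n : nat).
Local Notation C := R[i].

Definition diagf (f : R -> R) (d : 'rV[R]_n) : 'M[C]_n :=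
  diag_mx (map_mx (fun x => (f x)%:C) d).

Lemma conjCE (x : C) : Num.conj x = conjc x.
Proof.
rewrite {1}[x]Crect -complexRe -complexIm rmorphD rmorphM /= conjCi.
by rewrite !conj_Creal ?complex_real //; case: x => a b; simpc.
Qed.

Lemma adjmxK (A : 'M[C]_n) : adjmx (adjmx A) = A.
Proof. by apply/matrixP => i j; rewrite !mxE conjcK. Qed.

Lemma adjmxM (A B : 'M[C]_n) : adjmx (A *m B) = adjmx B *m adjmx A.
Proof. by rewrite /adjmx map_mxM trmx_mul. Qed.

Lemma adjmx_diagf f (d : 'rV[R]_n) : adjmx (diagf f d) = diagf f d.
Proof.
apply/matrixP => i j; rewrite !mxE.
by have [->|_] := eqVneq j i; rewrite ?eqxx ?mulr1n ?conjc_real // !mulr0n conjc0.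
Qed.

Lemma unitarymx_adjl (U : 'M[C]_n) : unitarymx U -> adjmx U *m U = 1%:M.
Proof. exact: mulmx1C. Qed.

Lemma diagf_mul f g (d : 'rV[R]_n) : diagf f d *m diagf g d = diagf (fun x => f x * g x) d.
Proof. by rewrite mulmx_diag; congr diag_mx; apply/rowP => j; rewrite !mxE rmorphM. Qed.

Lemma diagf_intertwine f (d e : 'rV[R]_n) (W : 'M[C]_n) :
  diagf id d *m W = W *m diagf id e -> diagf f d *m W = W *m diagf f e.
Proof.
(* Entrywise the hypothesis reads [d_i W_ij = W_ij e_j], so [W_ij != 0] forces [d_i = e_j]. *)
move/matrixP=> dWe; apply/matrixP => i j; move: (dWe i j).
rewrite !mul_diag_mx !mul_mx_diag !mxE.
have [->|Wn0] := eqVneq (W i j) 0; first by rewrite !(mulr0, mul0r).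
by rewrite mulrC => /(mulfI Wn0) /complexI ->; rewrite mulrC.
Qed.

Lemma spectral_decomp_fun_eq f (A U V : 'M[C]_n) (d e : 'rV[R]_n) :
  spectral_decomp A U d -> spectral_decomp A V e ->
  U *m diagf f d *m adjmx U = V *m diagf f e *m adjmx V.
Proof.
move=> [uU eAU] [uV eAV]; pose W := adjmx U *m V.
have dWe : diagf id d *m W = W *m diagf id e.
  have <- : adjmx U *m A *m V = diagf id d *m W.
    by rewrite eAU /W !mulmxA unitarymx_adjl // mul1mx -!mulmxA.
  by rewrite eAV /W -!mulmxA unitarymx_adjl // mulmx1 mulmxA.
rewrite -[LHS]mulmx1 -uV !mulmxA -[U *m _ *m _ *m V]mulmxA -[U *m _ *m (_ *m V)]mulmxA.
by rewrite -/W (diagf_intertwine f dWe) /W !mulmxA uU mul1mx.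
Qed.

Lemma mxfunE f (A U : 'M[C]_n) (d : 'rV[R]_n) :
  spectral_decomp A U d -> mxfun f A = U *m diagf f d *m adjmx U.
Proof.
move=> AUd; rewrite /mxfun.
case: pselect => [ex|no_decomp]; last by case: no_decomp; exists (U, d).
by case: (cid ex) => -[V e] /= AVe; exact: (spectral_decomp_fun_eq f AVe AUd).
Qed.

Lemma hermitian_spectral_decomp (A : 'M[C]_n) :
  hermitian A -> exists UD : 'M[C]_n * 'rV[R]_n, spectral_decomp A UD.1 UD.2.
Proof.
move=> hA.
have conjT_adj (M : 'M[C]_n) : (M ^t Num.conj)%sesqui = adjmx M.
  by apply/matrixP => i j; rewrite !mxE conjCE.
have hermA : A \is @hermitianmx C n false Num.conj.
  by apply/is_hermitianmxP; rewrite expr0 scale1r conjT_adj.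
have /orthomx_spectralP eA : A \is normalmx by rewrite qualifE conjT_adj hA.
move: eA; rewrite invmx_unitary ?spectral_unitarymx // conjT_adj => eA.
exists (adjmx (spectralmx A), map_mx (@complex.Re R) (spectral_diag A)).
split => /=.
  rewrite /unitarymx adjmxK; apply: mulmx1C.
  by move/unitarymxP: (spectral_unitarymx A); rewrite conjT_adj.
rewrite adjmxK {1}eA; congr (_ *m diag_mx _ *m _); apply/matrixP => i j.
by rewrite !mxE RRe_real //; move/mxOverP: (hermitian_spectral_diag_real hermA); apply.
Qed.

Local Notation qform A v := (((map_mx (@conjc R) v)^T *m A *m v) 0 0).

Lemma qform_delta (A : 'M[C]_n) i : qform A (delta_mx i 0 : 'cV_n) = A i i.
Proof.
have -> : map_mx (@conjc R) (delta_mx i 0) = delta_mx i 0 :> 'cV[C]_n.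
  by apply/matrixP => a b; rewrite !mxE conjc_nat.
by rewrite trmx_delta -rowE -colE !mxE.
Qed.

Lemma qform_conj_diagf f (U : 'M[C]_n) d (v : 'cV[C]_n) :
  qform (U *m diagf f d *m adjmx U) v =
  \sum_j (f (d 0 j))%:C * `|(adjmx U *m v) j 0| ^+ 2.
Proof.
rewrite !mulmxA.
have -> : (map_mx (@conjc R) v)^T *m U = (map_mx (@conjc R) (adjmx U *m v))^T.
  rewrite map_mxM trmx_mul /adjmx; congr (_ *m _).
  by apply/matrixP => i j; rewrite !mxE; exact/esym/conjcK.
rewrite -[_ *m adjmx U *m v]mulmxA mul_mx_diag !mxE; apply: eq_bigr => j _.
by rewrite [in X in X * _]mxE !mxE sqr_normc; ring.
Qed.

Lemma spectral_posdef (A U : 'M[C]_n) (d : 'rV[R]_n) :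
  spectral_decomp A U d -> (forall j, 0 < d 0 j) -> posdef A.
Proof.
case=> uU -> d_gt0; split.
  by rewrite /hermitian !adjmxM adjmxK (adjmx_diagf id) mulmxA.
move=> v v_neq0; rewrite -[diag_mx _]/(diagf id d) qform_conj_diagf.
have /cV0Pn[k yk_neq0] : adjmx U *m v != 0.
  apply: contraNneq v_neq0 => y0.
  by rewrite -[v]mul1mx -uU -mulmxA y0 mulmx0.
rewrite (bigD1 k) //=; apply: ltr_pwDl.
  by rewrite mulr_gt0 ?ltcR ?exprn_gt0 ?normr_gt0.
by apply: sumr_ge0 => j _; apply: mulr_ge0; rewrite ?ler0c ?exprn_ge0 // ltW.
Qed.

Lemma mxfun_diag_le f g (A : 'M[C]_n) i :
  hermitian A -> (forall x, f x <= g x) -> mxfun f A i i <= mxfun g A i i.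
Proof.
move=> /hermitian_spectral_decomp[[U d] /= AUd] fg.
rewrite (mxfunE f AUd) (mxfunE g AUd) -!qform_delta !qform_conj_diagf.
apply: ler_sum => j _; apply: ler_wpM2r; first exact/exprn_ge0/normr_ge0.
by rewrite lecR fg.
Qed.

Lemma psd_diag_ge0 (A : 'M[C]_n) i : psd A -> 0 <= A i i.
Proof. by case=> _ /(_ (delta_mx i 0)); rewrite qform_delta. Qed.

Lemma loewner_le_diag (A B : 'M[C]_n) i : loewner_le A B -> A i i <= B i i.
Proof. by move/(psd_diag_ge0 i); rewrite !mxE subr_ge0. Qed.

Lemma mxfun_affine a b (A : 'M[C]_n) :
  hermitian A -> mxfun (fun x => a + b * x) A = a%:C%:M + b%:C *: A.
Proof.
move=> /hermitian_spectral_decomp[[U d] /= AUd]; rewrite (mxfunE _ AUd).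
case: AUd => uU ->.
have -> : diagf (fun x => a + b * x) d = a%:C%:M + b%:C *: diagf id d.
  apply/matrixP => i j; rewrite !mxE.
  by case: eqP => _; rewrite ?mulr1n ?mulr0n ?mulr0 ?addr0 // rmorphD rmorphM.
rewrite mulmxDr mulmxDl mul_mx_scalar -scalemxAl uU scalemx1.
by rewrite -scalemxAr -scalemxAl.
Qed.

Lemma mxfunX f k (A : 'M[C]_n) :
  hermitian A -> mxfun (fun x => f x ^+ k) A = mxfun f A ^+ k.
Proof.
move=> /hermitian_spectral_decomp[[U d] /= AUd]; rewrite !(mxfunE _ AUd).
have uU : unitarymx U by case: AUd.
elim: k => [|k IHk].
  have -> : diagf (fun x => f x ^+ 0) d = 1%:M.
    by apply/matrixP => i j; rewrite !mxE; case: eqP.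
  by rewrite mulmx1 uU.
have -> : (fun x => f x ^+ k.+1) = (fun x => f x * f x ^+ k).
  by apply/funext => x; rewrite exprS.
rewrite exprS -IHk -diagf_mul -mulmxE !mulmxA -[_ *m adjmx U *m U]mulmxA.
by rewrite unitarymx_adjl // mulmx1.
Qed.

End SpectralCalculus.

Section RealSymmetric2.
Variable R : realType.
Local Notation C := R[i].

Definition cmx (X : 'M[R]_2) : 'M[C]_2 := map_mx (real_complex R) X.

Definition mx2 (a b c d : R) : 'M[R]_2 :=
  \matrix_(i, j) if i == 0 then if j == 0 then a else b else if j == 0 then c else d.

(* The real symmetric matrix with eigenvalue [a] on [(c, s)] and [b] on [(-s, c)]. *)
Definition rotdiag (c s a b : R) : 'M[C]_2 :=
  cmx (mx2 (c ^+ 2 * a + s ^+ 2 * b) (c * s * (a - b)) (c * s * (a - b)) (s ^+ 2 * a + c ^+ 2 * b)).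

Lemma ord2P (i : 'I_2) : i = 0 \/ i = 1.
Proof. by case: i => -[|[|//]] lti; [left | right]; apply: val_inj. Qed.

Lemma mx2_mul a b c d a' b' c' d' :
  mx2 a b c d *m mx2 a' b' c' d' =
  mx2 (a * a' + b * c') (a * b' + b * d') (c * a' + d * c') (c * b' + d * d').
Proof.
apply/matrixP => i j; rewrite !mxE !big_ord_recl big_ord0 /= !mxE /=.
by case: (ord2P i) => ->; case: (ord2P j) => ->; rewrite /= addr0.
Qed.

Lemma mx2_comb k l a b c d a' b' c' d' :
  k *: mx2 a b c d + l *: mx2 a' b' c' d' =
  mx2 (k * a + l * a') (k * b + l * b') (k * c + l * c') (k * d + l * d').
Proof. by apply/matrixP => i j; rewrite !mxE; case: (ord2P i) => ->; case: (ord2P j) => ->. Qed.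

Lemma mx2_trmx a b c d : (mx2 a b c d)^T = mx2 a c b d.
Proof. by apply/matrixP => i j; rewrite !mxE; case: (ord2P i) => ->; case: (ord2P j) => ->. Qed.

Lemma scalar_mx2 a : a%:M = mx2 a 0 0 a.
Proof. by apply/matrixP => i j; rewrite !mxE; case: (ord2P i) => ->; case: (ord2P j) => ->. Qed.

Lemma adjmx_cmx X : adjmx (cmx X) = cmx X^T.
Proof. by apply/matrixP => i j; rewrite !mxE conjc_real. Qed.

Lemma cmx_comb k l X Y : k%:C *: cmx X + l%:C *: cmx Y = cmx (k *: X + l *: Y).
Proof. by rewrite /cmx map_mxD !map_mxZ. Qed.

Lemma cmx_affine a b X : a%:C%:M + b%:C *: cmx X = cmx (a%:M + b *: X).
Proof. by rewrite /cmx map_mxD map_mxZ map_scalar_mx. Qed.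

Lemma cmxX X k : cmx X ^+ k = cmx (X ^+ k).
Proof. by rewrite /cmx rmorphXn. Qed.

Lemma mx2_sym_cube11 x y z : (mx2 x y y z ^+ 3) 1 1 = y ^+ 2 * (x + 2 * z) + z ^+ 3.
Proof. by rewrite !exprS expr0 mulr1 -!mulmxE !mx2_mul mxE /=; ring. Qed.

Lemma cmx_diag2 a b : cmx (mx2 a 0 0 b) = rotdiag 1 0 a b.
Proof. by rewrite /rotdiag; congr (cmx (mx2 _ _ _ _)); ring. Qed.

Lemma rotdiag_spectral c s a b : c ^+ 2 + s ^+ 2 = 1 ->
  spectral_decomp (rotdiag c s a b) (cmx (mx2 c (- s) s c)) (\row_j if j == 0 then a else b).
Proof.
move=> cs1; split.
  rewrite /unitarymx adjmx_cmx -map_mxM -(map_mx1 (real_complex R)) mx2_trmx mx2_mul.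
  by rewrite scalar_mx2; congr cmx; congr mx2; lra.
have -> : diag_mx (map_mx (real_complex R) (\row_j if j == 0 then a else b)) = cmx (mx2 a 0 0 b).
  by apply/matrixP => i j; rewrite !mxE; case: (ord2P i) => ->; case: (ord2P j) => ->.
by rewrite adjmx_cmx -!map_mxM mx2_trmx !mx2_mul; congr cmx; congr mx2; ring.
Qed.

Lemma mxfun_rotdiag f c s a b : c ^+ 2 + s ^+ 2 = 1 ->
  mxfun f (rotdiag c s a b) = rotdiag c s (f a) (f b).
Proof.
move=> cs1; rewrite (mxfunE f (rotdiag_spectral a b cs1)).
case: (rotdiag_spectral (f a) (f b) cs1) => _ ->; congr (_ *m _ *m _).
by apply/matrixP => i j; rewrite !mxE; case: (ord2P i) => ->; case: (ord2P j) => ->.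
Qed.

Lemma rotdiag_posdef c s a b : c ^+ 2 + s ^+ 2 = 1 -> 0 < a -> 0 < b ->
  posdef (rotdiag c s a b).
Proof.
move=> cs1 a_gt0 b_gt0; apply: spectral_posdef (rotdiag_spectral a b cs1) _ => j.
by rewrite mxE; case: ifP.
Qed.

Lemma mxpow_rotdiag_root c s x q : c ^+ 2 + s ^+ 2 = 1 -> 0 < x -> q != 0 ->
  mxpow q (rotdiag c s (x `^ q^-1) 1) = rotdiag c s x 1.
Proof.
move=> cs1 x_gt0 q_neq0.
by rewrite /mxpow mxfun_rotdiag // -powRrM mulVf // powRr1 ?ltW // powR1.
Qed.

Lemma mxlog_rotdiag_root c s x q : c ^+ 2 + s ^+ 2 = 1 ->
  mxlog (rotdiag c s (x `^ q^-1) 1) = rotdiag c s (q^-1 * ln x) 0.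
Proof. by move=> cs1; rewrite /mxlog mxfun_rotdiag // ln_powR ln1. Qed.

End RealSymmetric2.

Section RealInequalities.
Variable R : realType.

Lemma ler_cube (y z : R) : y <= z -> y ^+ 3 <= z ^+ 3.
Proof.
move=> le_yz; rewrite -subr_ge0.
have -> : z ^+ 3 - y ^+ 3 = (z - y) * ((z + y / 2) ^+ 2 + 3 / 4 * y ^+ 2) by field.
rewrite mulr_ge0 ?subr_ge0 //; have := sqr_ge0 (z + y / 2); have := sqr_ge0 y; lra.
Qed.

Lemma expR_ge_cube (x : R) : (1 + 3^-1 * x) ^+ 3 <= expR x.
Proof.
have -> : expR x = expR (3^-1 * x) ^+ 3 by rewrite -expRM_natr; congr expR; field.
exact/ler_cube/expR_ge1Dx.
Qed.

Lemma expRN1_lt1 : expR (-1) < 1 :> R.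
Proof. by rewrite -[X in _ < X]expR0 ltr_expR; lra. Qed.

Lemma powR_le1 (x p : R) : x <= 1 -> 0 <= p -> x `^ p <= 1.
Proof.
move=> x_le1 p_ge0; have [x_lt0|x_ge0] := ltP x 0; first by rewrite lt0_powR1.
apply: (@le_trans _ _ (1 `^ p)); last by rewrite powR1.
by rewrite ge0_ler_powR // nnegrE.
Qed.

Lemma cube_corner_gt1 (x y z h : R) : 0 < h -> 1 - h <= z ->
  1 + h ^+ 3 <= y ^+ 2 * (x + 2 * z) -> 1 < y ^+ 2 * (x + 2 * z) + z ^+ 3.
Proof.
move=> h_gt0 /ler_cube z3_ge big_yxz.
have : 0 < (1 - h) ^+ 3 + h ^+ 3.
  have -> : (1 - h) ^+ 3 + h ^+ 3 = 3 * (h - 2^-1) ^+ 2 + 4^-1 by field.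
  by have := sqr_ge0 (h - 2^-1); lra.
lra.
Qed.

Lemma exists_flat_rotation (t : R) : 0 < t ->
  exists u1 u2 : R, [/\ 0 < u1, 0 < u2, u1 ^+ 2 + u2 ^+ 2 = 1, 3 * u2 <= 4 * u1 & u1 * u2 <= t].
Proof.
move=> t_gt0; pose m := t / (4 * (1 + t)).
have m_gt0 : 0 < m by rewrite divr_gt0 //; lra.
have m_le4 : 4 * m <= 1.
  have -> : 4 * m = t / (1 + t) by rewrite /m; field; lra.
  by rewrite ler_pdivrMr; lra.
have m_le2 : 2 * m <= t.
  have -> : 2 * m = t / (2 * (1 + t)) by rewrite /m; field; lra.
  by rewrite ler_pdivrMr; nra.
clearbody m; pose D := 1 + m ^+ 2; have D_gt0 : 0 < D by rewrite ltr_wpDr ?sqr_ge0.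
pose u1 := (1 - m ^+ 2) / D; pose u2 := 2 * m / D.
have u1_gt0 : 0 < u1 by rewrite divr_gt0 // expr2; nra.
have u2_gt0 : 0 < u2 by rewrite divr_gt0 //; lra.
exists u1, u2; split => //.
- by rewrite /u1 /u2 /D; field; exact: lt0r_neq0 D_gt0.
- by rewrite /u1 /u2 !mulrA ler_pM2r ?invr_gt0 // expr2; nra.
have u1_le1 : u1 <= 1 by rewrite ler_pdivrMr // /D expr2; nra.
have u2_le : u2 <= 2 * m by rewrite ler_pdivrMr // /D expr2; nra.
by rewrite (le_trans _ m_le2) // -[2 * m]mul1r ler_pM // ltW.
Qed.

End RealInequalities.

(* A lower bound on [ln E] that pushes the second diagonal entry of [(I + S/3)^3] above 1
   (see [corner_gt1]). *)
Definition log_threshold (R : realType) (alpha q : R) : R :=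
  let h := (3 * q)^-1 in
  (2 + (1 + h ^+ 3) / (h ^+ 3 * (alpha * expR (-1) * (12 / 25)) ^+ 2)) / (1 - alpha).

Section Counterexample.
Variables (R : realType) (alpha q u1 u2 E : R).
Hypotheses (alpha_gt0 : 0 < alpha) (alpha_lt1 : alpha < 1) (q_gt0 : 0 < q).
Hypotheses (u1_gt0 : 0 < u1) (u2_gt0 : 0 < u2).
Hypothesis u_unit : u1 ^+ 2 + u2 ^+ 2 = 1.
(* Keeps the second diagonal entry of [(1 - alpha) A^q + alpha B^q] at most 1. *)
Hypothesis u_slope : 3 * u2 <= 4 * u1.
(* Cancels the off-diagonal entries of [(1 - alpha) A^q + alpha B^q]. *)
Hypothesis E_balance :
  (1 - alpha) * (E - 1) * (u1 * u2) = alpha * (1 - expR (-1)) * (12 / 25).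
Hypothesis lnE_large : log_threshold alpha q <= ln E.

Local Notation C := R[i].
Let A : 'M[C]_2 := rotdiag u1 u2 (E `^ q^-1) 1.
Let B : 'M[C]_2 := rotdiag (3 / 5) (4 / 5) (expR (-1) `^ q^-1) 1.

Let eps_gt0 : 0 < expR (-1) :> R. Proof. exact: expR_gt0. Qed.
Let eps_lt1 : expR (-1) < 1 :> R := expRN1_lt1 R.
Let w_unit : (3 / 5) ^+ 2 + (4 / 5) ^+ 2 = 1 :> R. Proof. by field. Qed.
Let q_neq0 : q != 0. Proof. exact: lt0r_neq0. Qed.

Let E_gt1 : 1 < E.
Proof.
have pos : 0 < (1 - alpha) * (E - 1) * (u1 * u2).
  by rewrite E_balance !mulr_gt0 // ?subr_gt0 ?invr_gt0.
by move: pos; rewrite -mulrA pmulr_rgt0 ?subr_gt0 // pmulr_lgt0 ?mulr_gt0 // subr_gt0.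
Qed.

Let E_gt0 : 0 < E. Proof. exact: lt_trans ltr01 E_gt1. Qed.

Lemma A_posdef : posdef A.
Proof. by apply: rotdiag_posdef => //; rewrite powR_gt0. Qed.

Lemma B_posdef : posdef B.
Proof. by apply: rotdiag_posdef => //; rewrite powR_gt0. Qed.

Let m11_le1 :
  (1 - alpha) * (u2 ^+ 2 * E + u1 ^+ 2) + alpha * ((4 / 5) ^+ 2 * expR (-1) + (3 / 5) ^+ 2) <= 1.
Proof.
set m11 := _ + _.
have : u1 * (m11 - 1) = u2 * ((1 - alpha) * (E - 1) * (u1 * u2))
    - u1 * alpha * (1 - expR (-1)) * (16 / 25) + u1 * (1 - alpha) * (u1 ^+ 2 + u2 ^+ 2 - 1).
  by rewrite /m11; field.
rewrite E_balance u_unit subrr mulr0 addr0 => e.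
have slope_ge0 : 0 <= alpha * (1 - expR (-1)) * (4 * u1 - 3 * u2).
  by rewrite !mulr_ge0 // ?subr_ge0 // ltW.
have : u1 * (m11 - 1) <= 0 by rewrite e; lra.
by rewrite pmulr_rle0 // subr_le0.
Qed.

Lemma powmean_11_le1 : powmean alpha q A B 1 1 <= 1.
Proof.
rewrite /powmean !mxpow_rotdiag_root //.
rewrite /rotdiag cmx_comb mx2_comb.
have -> : (1 - alpha) * (u1 * u2 * (E - 1)) + alpha * (3 / 5 * (4 / 5) * (expR (-1) - 1)) = 0.
  have -> : (1 - alpha) * (u1 * u2 * (E - 1)) = (1 - alpha) * (E - 1) * (u1 * u2) by ring.
  by rewrite E_balance; field.
rewrite cmx_diag2 /mxpow mxfun_rotdiag; last by rewrite expr1n expr0n addr0.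
rewrite !mxE /= -(rmorph1 (real_complex R)) lecR expr0n expr1n mul0r mul1r add0r.
by rewrite !mulr1 powR_le1 // divr_ge0 // ltW.
Qed.

(* [I + S / 3 = mx2 x y y z] for [S = (1 - alpha) log A + alpha log B]. *)
Local Notation h := ((3 * q)^-1).
Local Notation c := (alpha * expR (-1) * (12 / 25)).
Local Notation x := (1 + h * ((1 - alpha) * u1 ^+ 2 * ln E - alpha * (9 / 25))).
Local Notation y := (h * ((1 - alpha) * (u1 * u2) * ln E - alpha * (12 / 25))).
Local Notation z := (1 + h * ((1 - alpha) * u2 ^+ 2 * ln E - alpha * (16 / 25))).

Let h_gt0 : 0 < h. Proof. by rewrite invr_gt0 mulr_gt0. Qed.
Let c_gt0 : 0 < c. Proof. by rewrite !mulr_gt0 //; lra. Qed.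
Let lnE_ge0 : 0 <= ln E. Proof. by rewrite ln_ge0 // ltW. Qed.

Let y_le : y <= - (h * c).
Proof.
have lnE_le : ln E <= E - 1.
  by have := expR_ge1Dx (ln E); rewrite lnK ?posrE //; lra.
rewrite -(mulrN h) ler_pM2l //.
have : (1 - alpha) * (u1 * u2) * ln E <= (1 - alpha) * (u1 * u2) * (E - 1).
  by apply: ler_wpM2l => //; rewrite mulr_ge0 ?subr_ge0 ?mulr_ge0 // ltW.
by rewrite [X in _ <= X]mulrAC E_balance; lra.
Qed.

Let x2z_ge : (1 + h ^+ 3) / (h ^+ 2 * c ^+ 2) <= x + 2 * z.
Proof.
have le1 : 2 + (1 + h ^+ 3) / (h ^+ 3 * c ^+ 2) <= (1 - alpha) * ln E.
  by rewrite -ler_pdivrMl ?subr_gt0 // mulrC.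
have le2 : (1 - alpha) * ln E <= (1 - alpha) * ln E * (u1 ^+ 2 + 2 * u2 ^+ 2).
  have u2sq_ge0 : 0 <= u2 ^+ 2 := sqr_ge0 u2.
  have coef_ge1 : 1 <= u1 ^+ 2 + 2 * u2 ^+ 2 by move: u_unit; lra.
  by rewrite ler_peMr // mulr_ge0 // subr_ge0 ltW.
have W_ge : (1 + h ^+ 3) / (h ^+ 3 * c ^+ 2) <=
    (1 - alpha) * ln E * (u1 ^+ 2 + 2 * u2 ^+ 2) - alpha * (41 / 25).
  by move: le1 le2 alpha_lt1; lra.
have -> : x + 2 * z = 3 + h * ((1 - alpha) * ln E * (u1 ^+ 2 + 2 * u2 ^+ 2) - alpha * (41 / 25)).
  by field.
have -> : (1 + h ^+ 3) / (h ^+ 2 * c ^+ 2) = h * ((1 + h ^+ 3) / (h ^+ 3 * c ^+ 2)).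
  by field; rewrite q_neq0 (lt0r_neq0 eps_gt0) (lt0r_neq0 alpha_gt0).
by apply: ler_wpDl; [lra | rewrite ler_pM2l].
Qed.

Let corner_gt1 : 1 < y ^+ 2 * (x + 2 * z) + z ^+ 3.
Proof.
apply: (cube_corner_gt1 h_gt0).
  rewrite lerD2l -mulrN1 ler_wpM2l ?ltW //.
  have P_ge0 : 0 <= (1 - alpha) * u2 ^+ 2 * ln E by rewrite !mulr_ge0 ?sqr_ge0 // ?subr_ge0 ?ltW.
  by move: P_ge0 alpha_lt1; lra.
have hc2_le : (h * c) ^+ 2 <= y ^+ 2 by move: y_le (mulr_gt0 h_gt0 c_gt0); rewrite !expr2; nra.
have -> : 1 + h ^+ 3 = (h * c) ^+ 2 * ((1 + h ^+ 3) / (h ^+ 2 * c ^+ 2)).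
  by field; rewrite q_neq0 (lt0r_neq0 eps_gt0) (lt0r_neq0 alpha_gt0).
have K_gt0 : 0 < (1 + h ^+ 3) / (h ^+ 2 * c ^+ 2) :=
  divr_gt0 (addr_gt0 ltr01 (exprn_gt0 3 h_gt0)) (mulr_gt0 (exprn_gt0 2 h_gt0) (exprn_gt0 2 c_gt0)).
by apply: ler_pM => //; [exact: sqr_ge0 | exact: ltW].
Qed.

Lemma LEmean_11_gt1 : 1 < LEmean alpha A B 1 1.
Proof.
rewrite /LEmean !mxlog_rotdiag_root // expRK /rotdiag cmx_comb mx2_comb.
set S := mx2 _ _ _ _.
have S_herm : hermitian (cmx S) by rewrite /hermitian adjmx_cmx mx2_trmx.
rewrite /mxexp; apply: (lt_le_trans _ (mxfun_diag_le 1 S_herm (@expR_ge_cube R))).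
rewrite (mxfunX (fun x => 1 + 3^-1 * x) 3) // mxfun_affine // cmx_affine cmxX mxE.
have -> : 1%:M + 3^-1 *: S = mx2 x y y z.
  by rewrite scalar_mx2 -[mx2 1 0 0 1]scale1r /S mx2_comb; congr mx2; field.
by rewrite mx2_sym_cube11 -(rmorph1 (real_complex R)) ltcR.
Qed.

Lemma counterexample :
  posdef A /\ posdef B /\ ~ loewner_le (LEmean alpha A B) (powmean alpha q A B).
Proof.
split; first exact: A_posdef.
split; first exact: B_posdef.
move/(loewner_le_diag 1) => LE_le_pow.
by have := lt_le_trans LEmean_11_gt1 (le_trans LE_le_pow powmean_11_le1); rewrite ltxx.
Qed.

End Counterexample.

Lemma counterexample_parameters (R : realType) (alpha q : R) : 0 < alpha < 1 -> 0 < q ->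
  exists u1 u2 E : R,
    [/\ 0 < u1, 0 < u2, u1 ^+ 2 + u2 ^+ 2 = 1 & 3 * u2 <= 4 * u1] /\
    (1 - alpha) * (E - 1) * (u1 * u2) = alpha * (1 - expR (-1)) * (12 / 25) /\
    log_threshold alpha q <= ln E.
Proof.
move=> /andP[alpha_gt0 alpha_lt1] q_gt0.
pose kappa := alpha * (1 - expR (-1)) * (12 / 25) / (1 - alpha).
have kappa_gt0 : 0 < kappa.
  have eps_lt1 := expRN1_lt1 R.
  by rewrite divr_gt0 ?mulr_gt0 ?subr_gt0 //; lra.
have [u1 [u2 [u1_gt0 u2_gt0 u_unit u_slope u_small]]] :=
  exists_flat_rotation (divr_gt0 kappa_gt0 (expR_gt0 (log_threshold alpha q))).
have u_gt0 : 0 < u1 * u2 by rewrite mulr_gt0.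
exists u1, u2, (1 + kappa / (u1 * u2)); do !split => //.
  by rewrite /kappa; field; rewrite !lt0r_neq0 // subr_gt0.
have exp_le : expR (log_threshold alpha q) <= kappa / (u1 * u2).
  by rewrite ler_pdivlMr // mulrC -ler_pdivlMr ?expR_gt0.
rewrite -ler_expR lnK; last by rewrite posrE (addr_gt0 ltr01 (divr_gt0 kappa_gt0 u_gt0)).
by rewrite (le_trans exp_le) // ler_wpDl.
Qed.

Theorem theorem4p5 (R : realType) (alpha q : R) :
  0 < alpha < 1 -> 0 < q ->
  exists A B : 'M[R[i]]_2,
    posdef A /\ posdef B /\ ~ loewner_le (LEmean alpha A B) (powmean alpha q A B).
Proof.
move=> alpha01 q_gt0; have /andP[alpha_gt0 alpha_lt1] := alpha01.
have [u1 [u2 [E [[u1_gt0 u2_gt0 u_unit u_slope] [E_balance lnE_large]]]]] :=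
  counterexample_parameters alpha01 q_gt0.
eexists; eexists.
exact: (counterexample alpha_gt0 alpha_lt1 q_gt0 u1_gt0 u2_gt0 u_unit u_slope E_balance lnE_large).
Qed.
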